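(* If $F:\mathbb{R}\to\mathbb{R}$ is a Darboux function whose set of points of continuity is uncountable, then there is a continuous, non-constant function $g:\mathbb{R}\to\mathbb{R}$ such that $F+g$ is Darboux.
   Context: A function $F:\mathbb{R}\to\mathbb{R}$ is Darboux if the image under $F$ of every interval is an interval. *)

From Stdlib Require Import Reals.
Open Scope R_scope.

(* A subset of R is an interval iff it is convex (order-convex);
   this includes the empty set, singletons, and unbounded intervals. *)
Definition is_interval (S : R -> Prop) : Prop :=
  forall x y z : R, S x -> S z -> x <= y <= z -> S y.

Definition image (F : R -> R) (S : R -> Prop) : R -> Prop :=
  fun y => exists x : R, S x /\ F x = y.

Definition Darboux (F : R -> R) : Prop :=
  forall S : R -> Prop, is_interval S -> is_interval (image F S).

Definition continuity_points (F : R -> R) : R -> Prop :=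
  fun x => continuity_pt F x.

Definition countable_set (A : R -> Prop) : Prop :=
  exists f : R -> nat, forall x y : R, A x -> A y -> f x = f y -> x = y.

Definition uncountable_set (A : R -> Prop) : Prop := ~ countable_set A.

Definition constant_fun (g : R -> R) : Prop := forall x y : R, g x = g y.

From Stdlib Require Import Reals Lra Lia ZArith Classical ClassicalEpsilon List Cantor.
Open Scope R_scope.

(* Every interval containing uncountably many continuity points of F contains two disjoint
   closed subintervals with the same property on which F oscillates as little as we like:
   small balls around two condensation points of the continuity points.  Iterating gives a
   Cantor scheme whose Cantor set K consists of continuity points of F.  The associated Cantor
   function g is continuous, rises from 0 to 1, and is locally constant off K.  So F + g is
   continuous at every point of K and near every other point is a vertical translate of F,
   hence has the intermediate value property locally; a supremum argument turns this local
   property into the global one. *)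

Lemma countable_subset (A B : R -> Prop) :
  (forall x, A x -> B x) -> countable_set B -> countable_set A.
Proof. intros HAB [f Hf]. exists f. intros x y Ax Ay. apply Hf; auto. Qed.

Lemma uncountable_superset (A B : R -> Prop) :
  (forall x, A x -> B x) -> uncountable_set A -> uncountable_set B.
Proof. intros HAB HA HB. exact (HA (countable_subset A B HAB HB)). Qed.

Lemma countable_bigcup (A : nat -> R -> Prop) (S : R -> Prop) :
  (forall x, S x -> exists n, A n x) -> (forall n, countable_set (A n)) -> countable_set S.
Proof.
  intros Hcover HA.
  apply choice in HA as [f Hf].
  destruct (choice (fun x n => S x -> A n x)) as [idx Hidx].
  { intro x. destruct (classic (S x)) as [Sx|nSx].
    - destruct (Hcover x Sx) as [n Hn]. exists n. auto.
    - exists 0%nat. tauto. }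
  exists (fun x => Cantor.to_nat (idx x, f (idx x) x)).
  intros x y Sx Sy E.
  apply (f_equal Cantor.of_nat) in E. rewrite !Cantor.cancel_of_to in E.
  injection E as Eidx Ef. rewrite <- Eidx in Ef.
  apply (Hf (idx x)); auto. rewrite Eidx. auto.
Qed.

Lemma countable_union (A B : R -> Prop) :
  countable_set A -> countable_set B -> countable_set (fun x => A x \/ B x).
Proof.
  intros HA HB.
  apply (countable_bigcup (fun n => match n with O => A | S _ => B end)).
  - intros x [Ax|Bx]; [exists 0%nat|exists 1%nat]; auto.
  - intros [|n]; auto.
Qed.

Lemma uncountable_two_points (A : R -> Prop) :
  uncountable_set A -> exists p q, p < q /\ A p /\ A q.
Proof.
  intros HA. apply NNPP. intro Hno. apply HA.
  exists (fun _ => 0%nat). intros x y Ax Ay _.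
  destruct (Rtotal_order x y) as [Hxy|[Hxy|Hxy]]; auto; exfalso; apply Hno; eauto.
Qed.

Definition grid_interval (k : nat) (y : R) : Prop :=
  let '(m, j) := Cantor.of_nat k in
  let '(a, b) := Cantor.of_nat j in
  INR a - INR b - 2 < y * (INR m + 1) < INR a - INR b.

Lemma IZR_as_INR_difference (z : Z) : IZR z = INR (Z.to_nat z) - INR (Z.to_nat (- z)).
Proof.
  rewrite !INR_IZR_INZ.
  destruct (Z.le_gt_cases 0 z).
  - replace (Z.to_nat (- z)) with 0%nat by lia. rewrite Z2Nat.id by lia. simpl. ring.
  - replace (Z.to_nat z) with 0%nat by lia. rewrite Z2Nat.id, opp_IZR by lia. simpl. ring.
Qed.

Lemma grid_interval_small (x eps : R) : 0 < eps ->
  exists k, grid_interval k x /\ forall y, grid_interval k y -> x - eps < y < x + eps.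
Proof.
  intros Heps.
  destruct (archimed_cor1 (eps / 2)) as [m [Hm Hm0]]; [lra|].
  assert (Hmpos : 0 < INR m) by (apply lt_0_INR; lia).
  assert (Hmeps : 2 < eps * (INR m + 1)).
  { assert (INR m * / INR m = 1) by (field; lra). nra. }
  destruct (archimed (x * (INR m + 1))) as [Hup1 Hup2].
  set (z := up (x * (INR m + 1))) in *.
  exists (Cantor.to_nat (m, Cantor.to_nat (Z.to_nat z, Z.to_nat (- z)))).
  unfold grid_interval. rewrite !Cantor.cancel_of_to, <- IZR_as_INR_difference.
  split; [lra|]. intros y Hy. split; nra.
Qed.

Definition condensation_point (S : R -> Prop) (x : R) : Prop :=
  forall eps, 0 < eps -> uncountable_set (fun y => S y /\ x - eps < y < x + eps).

Lemma countable_non_condensation_points (S : R -> Prop) :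
  countable_set (fun x => S x /\ ~ condensation_point S x).
Proof.
  apply (countable_bigcup (fun k y => S y /\ grid_interval k y /\
                                      countable_set (fun z => S z /\ grid_interval k z))).
  - intros x [Sx Hx].
    apply not_all_ex_not in Hx as [eps Hx]. apply imply_to_and in Hx as [Heps Hx].
    apply NNPP in Hx.
    destruct (grid_interval_small x eps Heps) as [k [Hk Hsmall]].
    exists k. repeat split; auto.
    eapply countable_subset; [|exact Hx]. intros z [Sz Gz]. auto.
  - intro k. destruct (classic (countable_set (fun z => S z /\ grid_interval k z))) as [Hc|Hnc].
    + eapply countable_subset; [|exact Hc]. intros z [Sz [Gz _]]. auto.
    + exists (fun _ => 0%nat). intros x y [_ [_ Hc]]. contradiction.
Qed.

Lemma condensation_points_uncountable (S : R -> Prop) :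
  uncountable_set S -> uncountable_set (fun x => S x /\ condensation_point S x).
Proof.
  intros HS Hc. apply HS.
  eapply countable_subset; [|exact (countable_union _ _ Hc (countable_non_condensation_points S))].
  intros x Sx. destruct (classic (condensation_point S x)); auto.
Qed.

Lemma continuity_pt_iff (f : R -> R) (x : R) :
  continuity_pt f x <->
  forall eps, 0 < eps -> exists d, 0 < d /\ forall y, Rabs (y - x) < d -> Rabs (f y - f x) < eps.
Proof.
  split; intros H eps Heps; destruct (H eps Heps) as [d [Hd Hnear]]; exists d; split; auto.
  - intros y Hy. destruct (Req_dec x y) as [<-|Hxy].
    + unfold Rminus. rewrite Rplus_opp_r, Rabs_R0. exact Heps.
    + apply (Hnear y). split; [split; [exact I|exact Hxy]|exact Hy].
  - intros y [_ Hy]. exact (Hnear y Hy).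
Qed.

Lemma lipschitz_continuity (f : R -> R) (L : R) : 0 <= L ->
  (forall x y, Rabs (f x - f y) <= L * Rabs (x - y)) -> continuity f.
Proof.
  intros HL Hf x. apply continuity_pt_iff. intros eps Heps.
  exists (eps / (L + 1)). split; [apply Rdiv_lt_0_compat; lra|]. intros y Hy.
  assert (Rabs (y - x) * (L + 1) < eps).
  { apply (Rmult_lt_compat_r (L + 1)) in Hy; [|lra].
    unfold Rdiv in Hy. rewrite Rmult_assoc, Rinv_l, Rmult_1_r in Hy by lra. exact Hy. }
  pose proof (Hf y x). pose proof (Rabs_pos (y - x)). nra.
Qed.

Definition intermediate_values (h : R -> R) : Prop :=
  forall p q c, p < q -> (h p < c < h q \/ h q < c < h p) -> exists z, p <= z <= q /\ h z = c.

Lemma darboux_iff_intermediate_values (h : R -> R) : Darboux h <-> intermediate_values h.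
Proof.
  split.
  - intros Hh p q c Hpq Hc.
    assert (Hconv : is_interval (fun x => p <= x <= q)) by (intros x y z Hx Hz Hy; lra).
    assert (Hp : image h (fun x => p <= x <= q) (h p)) by (exists p; split; [lra|reflexivity]).
    assert (Hq : image h (fun x => p <= x <= q) (h q)) by (exists q; split; [lra|reflexivity]).
    destruct Hc as [Hc|Hc].
    + exact (Hh _ Hconv (h p) c (h q) Hp Hq ltac:(lra)).
    + exact (Hh _ Hconv (h q) c (h p) Hq Hp ltac:(lra)).
  - intros Hh S HS y1 c y3 [x1 [S1 <-]] [x3 [S3 <-]] Hc.
    destruct (Req_dec c (h x1)) as [->|Hc1]; [exists x1; auto|].
    destruct (Req_dec c (h x3)) as [->|Hc3]; [exists x3; auto|].
    destruct (Rtotal_order x1 x3) as [Hx|[<-|Hx]]; [| lra |].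
    + destruct (Hh x1 x3 c Hx ltac:(lra)) as [z [Hz Ez]].
      exists z. split; [exact (HS x1 z x3 S1 S3 Hz)|exact Ez].
    + destruct (Hh x3 x1 c Hx ltac:(lra)) as [z [Hz Ez]].
      exists z. split; [exact (HS x3 z x1 S3 S1 Hz)|exact Ez].
Qed.

Definition locally_darboux (h : R -> R) (x : R) : Prop :=
  exists d, 0 < d /\ forall u v c, x - d < u -> u < v -> v < x + d ->
    (h u < c < h v \/ h v < c < h u) -> exists z, u <= z <= v /\ h z = c.

Lemma locally_darboux_opp (h : R -> R) (x : R) :
  locally_darboux h x -> locally_darboux (fun y => - h y) x.
Proof.
  intros [d [Hd Hh]]. exists d. split; [exact Hd|]. intros u v c Hu Huv Hv Hc.
  destruct (Hh u v (- c) Hu Huv Hv ltac:(lra)) as [z [Hz Ez]].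
  exists z. split; [exact Hz|lra].
Qed.

Lemma locally_darboux_add_locally_constant (F g : R -> R) (x : R) : Darboux F ->
  (exists d, 0 < d /\ forall y, Rabs (y - x) < d -> g y = g x) ->
  locally_darboux (fun y => F y + g y) x.
Proof.
  intros HF [d [Hd Hg]]. exists d. split; [exact Hd|]. intros u v c Hu Huv Hv Hc.
  assert (Hgx : forall y, u <= y <= v -> g y = g x) by (intros y Hy; apply Hg, Rabs_def1; lra).
  rewrite (Hgx u), (Hgx v) in Hc by lra.
  destruct (proj1 (darboux_iff_intermediate_values F) HF u v (c - g x) Huv ltac:(lra))
    as [z [Hz Ez]].
  exists z. split; [exact Hz|]. rewrite Hgx by exact Hz. lra.
Qed.

(* [s] is the supremum of the [z] such that [h < c] on [[p, z]]. *)
Lemma first_crossing (h : R -> R) (p q c : R) : p < q -> h p < c -> c <= h q ->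
  exists s, p <= s <= q /\
    (forall r, 0 < r -> exists u, p <= u <= s /\ s - r < u /\ h u < c) /\
    (forall r, 0 < r -> exists w, s <= w <= q /\ w < s + r /\ c <= h w).
Proof.
  intros Hpq Hp Hq.
  set (E := fun z => p <= z <= q /\ forall w, p <= w <= z -> h w < c).
  assert (Ep : E p) by (split; [lra|intros w Hw; replace w with p by lra; exact Hp]).
  destruct (completeness E) as [s [Hub Hleast]].
  { exists q. intros z [Hz _]. lra. }
  { exists p. exact Ep. }
  assert (Hps : p <= s) by exact (Hub p Ep).
  assert (Hsq : s <= q) by (apply Hleast; intros z [Hz _]; lra).
  assert (Hbelow : forall w, p <= w < s -> h w < c).
  { intros w Hw. apply NNPP. intro Hw'.
    enough (s <= w) by lra.
    apply Hleast. intros z [_ Hz]. apply Rnot_lt_le. intro Hwz. apply Hw', Hz. lra. }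
  exists s. split; [lra|split].
  - intros r Hr. exists (Rmax p (s - r / 2)). unfold Rmax.
    destruct (Rle_dec p (s - r / 2)); repeat split; try lra.
    apply Hbelow. lra.
  - intros r Hr. apply NNPP. intro Hno.
    assert (Hlt : forall w, s <= w <= q -> w < s + r -> h w < c).
    { intros w Hw Hwr. apply Rnot_le_lt. intro Hcw. apply Hno. exists w. auto. }
    assert (Ez : E (Rmin q (s + r / 2))).
    { unfold Rmin. destruct (Rle_dec q (s + r / 2)); split; try lra;
        intros w Hw; (destruct (Rlt_dec w s); [apply Hbelow|apply Hlt]); lra. }
    pose proof (Hub _ Ez) as Hzs. pose proof (Hlt q ltac:(lra)).
    unfold Rmin in Hzs. destruct (Rle_dec q (s + r / 2)); lra.
Qed.

Lemma intermediate_values_of_local (h : R -> R) :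
  (forall x, continuity_pt h x \/ locally_darboux h x) ->
  forall p q c, p < q -> h p < c < h q -> exists z, p <= z <= q /\ h z = c.
Proof.
  intros Hloc p q c Hpq Hc.
  destruct (first_crossing h p q c Hpq ltac:(lra) ltac:(lra)) as [s [Hs [Hleft Hright]]].
  destruct (Req_dec (h s) c) as [Ec|Hne]; [exists s; auto|].
  destruct (Hloc s) as [Hcont|[d [Hd Hivt]]].
  - exfalso.
    destruct (proj1 (continuity_pt_iff h s) Hcont (Rabs (h s - c))) as [d [Hd Hnear]].
    { apply Rabs_pos_lt. lra. }
    destruct (Hleft d Hd) as [u [Hu [Hud Hhu]]].
    destruct (Hright d Hd) as [w [Hw [Hwd Hhw]]].
    pose proof (Hnear u ltac:(apply Rabs_def1; lra)).
    pose proof (Hnear w ltac:(apply Rabs_def1; lra)).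
    split_Rabs; lra.
  - destruct (Hleft (d / 2) ltac:(lra)) as [u [Hu [Hud Hhu]]].
    destruct (Hright (d / 2) ltac:(lra)) as [w [Hw [Hwd Hhw]]].
    destruct (Req_dec (h w) c) as [Ew|Hnew]; [exists w; split; [lra|exact Ew]|].
    assert (Huw : u < w) by (destruct (Req_dec u w) as [<-|]; lra).
    destruct (Hivt u w c ltac:(lra) Huw ltac:(lra) ltac:(lra)) as [z [Hz Ez]].
    exists z. split; [lra|exact Ez].
Qed.

Lemma darboux_of_local (h : R -> R) :
  (forall x, continuity_pt h x \/ locally_darboux h x) -> Darboux h.
Proof.
  intros Hloc. apply darboux_iff_intermediate_values. intros p q c Hpq [Hc|Hc].
  - exact (intermediate_values_of_local h Hloc p q c Hpq Hc).
  - assert (Hloc' : forall x, continuity_pt (fun y => - h y) x \/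
                              locally_darboux (fun y => - h y) x).
    { intro x. destruct (Hloc x) as [H|H].
      - left. exact (continuity_pt_opp h x H).
      - right. exact (locally_darboux_opp h x H). }
    destruct (intermediate_values_of_local _ Hloc' p q (- c) Hpq ltac:(lra)) as [z [Hz Ez]].
    exists z. split; [exact Hz|lra].
Qed.

Lemma half_pow_small (eps : R) : 0 < eps -> exists N, forall n, (N <= n)%nat -> 2 * (1/2) ^ n < eps.
Proof.
  intros Heps.
  destruct (pow_lt_1_zero (1/2) ltac:(rewrite Rabs_right; lra) (eps / 2) ltac:(lra)) as [N HN].
  exists N. intros n Hn. specialize (HN n Hn).
  rewrite Rabs_right in HN; [lra|]. apply Rle_ge, pow_le. lra.
Qed.

Lemma Req_of_half_pow (a b : R) (N : nat) :
  (forall n, (N <= n)%nat -> Rabs (a - b) <= 4 * (1/2) ^ n) -> a = b.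
Proof.
  intros H. apply NNPP. intro Hab.
  destruct (half_pow_small (Rabs (a - b) / 2)) as [M HM].
  { apply Rdiv_lt_0_compat; [apply Rabs_pos_lt; lra|lra]. }
  specialize (H (Nat.max N M) ltac:(lia)). specialize (HM (Nat.max N M) ltac:(lia)). lra.
Qed.

Definition ramp (a b x : R) : R := Rmin 1 (Rmax 0 ((x - a) / (b - a))).

Lemma ramp_range (a b x : R) : 0 <= ramp a b x <= 1.
Proof. unfold ramp, Rmin, Rmax. repeat destruct Rle_dec; lra. Qed.

Lemma ramp_left (a b x : R) : a < b -> x <= a -> ramp a b x = 0.
Proof.
  intros Hab Hx. unfold ramp.
  assert ((x - a) / (b - a) <= 0).
  { unfold Rdiv. assert (0 < / (b - a)) by (apply Rinv_0_lt_compat; lra). nra. }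
  unfold Rmin, Rmax. repeat destruct Rle_dec; lra.
Qed.

Lemma ramp_right (a b x : R) : a < b -> b <= x -> ramp a b x = 1.
Proof.
  intros Hab Hx. unfold ramp.
  assert (1 <= (x - a) / (b - a)).
  { apply Rmult_le_reg_r with (b - a); [lra|].
    unfold Rdiv. rewrite Rmult_assoc, Rinv_l by lra. lra. }
  unfold Rmin, Rmax. repeat destruct Rle_dec; lra.
Qed.

Lemma ramp_lipschitz (a b x y : R) :
  Rabs (ramp a b x - ramp a b y) <= Rabs (/ (b - a)) * Rabs (x - y).
Proof.
  unfold ramp.
  assert (Hclip : forall u v, Rabs (Rmin 1 (Rmax 0 u) - Rmin 1 (Rmax 0 v)) <= Rabs (u - v)).
  { intros u v. unfold Rmin, Rmax. repeat destruct Rle_dec; split_Rabs; lra. }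
  eapply Rle_trans; [apply Hclip|]. rewrite <- Rabs_mult. right. f_equal. unfold Rdiv. ring.
Qed.

Definition closed_interval (J : R * R) (x : R) : Prop := fst J <= x <= snd J.

Definition splits_into (J JL JR : R * R) : Prop :=
  fst J < fst JL /\ snd JL < fst JR /\ snd JR < snd J.

Definition in_level (I : list bool -> R * R) (n : nat) (x : R) : Prop :=
  exists t, length t = n /\ closed_interval (I t) x.

Section CantorFunction.

Variable I : list bool -> R * R.
Hypothesis I_nondegenerate : forall s, fst (I s) < snd (I s).
Hypothesis I_splits : forall s, splits_into (I s) (I (false :: s)) (I (true :: s)).

(* [cantor_approx n s] rises from 0 to 1 across [I s], in 2^n ramps of height 2^-n
   placed on the depth-n descendants of [I s]. *)
Fixpoint cantor_approx (n : nat) (s : list bool) (x : R) : R :=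
  match n with
  | O => ramp (fst (I s)) (snd (I s)) x
  | S n => (cantor_approx n (false :: s) x + cantor_approx n (true :: s) x) / 2
  end.

Lemma cantor_approx_range (n : nat) : forall s x, 0 <= cantor_approx n s x <= 1.
Proof.
  induction n as [|n IH]; intros s x; simpl.
  - apply ramp_range.
  - pose proof (IH (false :: s) x). pose proof (IH (true :: s) x). lra.
Qed.

Lemma cantor_approx_left (n : nat) : forall s x, x <= fst (I s) -> cantor_approx n s x = 0.
Proof.
  induction n as [|n IH]; intros s x Hx; simpl.
  - apply ramp_left; auto.
  - destruct (I_splits s) as [H1 [H2 H3]].
    pose proof (I_nondegenerate (false :: s)). rewrite !IH by lra. lra.
Qed.

Lemma cantor_approx_right (n : nat) : forall s x, snd (I s) <= x -> cantor_approx n s x = 1.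
Proof.
  induction n as [|n IH]; intros s x Hx; simpl.
  - apply ramp_right; auto.
  - destruct (I_splits s) as [H1 [H2 H3]].
    pose proof (I_nondegenerate (true :: s)). rewrite !IH by lra. lra.
Qed.

Lemma cantor_approx_lipschitz (n : nat) : forall s, exists L, 0 <= L /\
  forall x y, Rabs (cantor_approx n s x - cantor_approx n s y) <= L * Rabs (x - y).
Proof.
  induction n as [|n IH]; intros s; simpl.
  - exists (Rabs (/ (snd (I s) - fst (I s)))). split; [apply Rabs_pos|]. intros; apply ramp_lipschitz.
  - destruct (IH (false :: s)) as [L0 [HL0 H0]]. destruct (IH (true :: s)) as [L1 [HL1 H1]].
    exists (L0 + L1). split; [lra|]. intros x y.
    pose proof (H0 x y). pose proof (H1 x y). pose proof (Rabs_pos (x - y)).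
    match goal with |- Rabs ((?a0 + ?a1) / 2 - (?b0 + ?b1) / 2) <= _ =>
      replace ((a0 + a1) / 2 - (b0 + b1) / 2) with ((a0 - b0) / 2 + (a1 - b1) / 2) by field end.
    eapply Rle_trans; [apply Rabs_triang|]. unfold Rdiv. rewrite !Rabs_mult.
    rewrite Rabs_inv, (Rabs_right 2) by lra. nra.
Qed.

Lemma cantor_approx_continuous (n : nat) (s : list bool) : continuity (cantor_approx n s).
Proof.
  destruct (cantor_approx_lipschitz n s) as [L [HL Hlip]]. exact (lipschitz_continuity _ L HL Hlip).
Qed.

(* At most one of the two children moves at [x]: [x] lies left of the right child or right of
   the left one. *)
Lemma cantor_approx_step (n : nat) : forall s x,
  Rabs (cantor_approx (S n) s x - cantor_approx n s x) <= (1/2) ^ n.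
Proof.
  induction n as [|n IH]; intros s x.
  - simpl. pose proof (ramp_range (fst (I s)) (snd (I s)) x).
    pose proof (cantor_approx_range 0 (false :: s) x). pose proof (cantor_approx_range 0 (true :: s) x).
    simpl in *. split_Rabs; lra.
  - change (cantor_approx (S (S n)) s x) with
      ((cantor_approx (S n) (false :: s) x + cantor_approx (S n) (true :: s) x) / 2).
    change (cantor_approx (S n) s x) with
      ((cantor_approx n (false :: s) x + cantor_approx n (true :: s) x) / 2).
    change ((1/2) ^ S n) with (1/2 * (1/2) ^ n).
    destruct (I_splits s) as [H1 [H2 H3]].
    pose proof (I_nondegenerate (false :: s)). pose proof (I_nondegenerate (true :: s)).
    pose proof (IH (false :: s) x). pose proof (IH (true :: s) x).
    destruct (Rle_dec x (snd (I (false :: s)))).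
    + rewrite (cantor_approx_left (S n) (true :: s) x), (cantor_approx_left n (true :: s) x) by lra.
      split_Rabs; lra.
    + rewrite (cantor_approx_right (S n) (false :: s) x), (cantor_approx_right n (false :: s) x) by lra.
      split_Rabs; lra.
Qed.

Lemma cantor_approx_tail (n k : nat) (s : list bool) (x : R) :
  Rabs (cantor_approx (n + k) s x - cantor_approx n s x) <= 2 * (1/2) ^ n - 2 * (1/2) ^ (n + k).
Proof.
  induction k as [|k IH].
  - rewrite Nat.add_0_r. unfold Rminus. rewrite Rplus_opp_r, Rabs_R0. lra.
  - rewrite Nat.add_succ_r. pose proof (cantor_approx_step (n + k) s x).
    change ((1/2) ^ S (n + k)) with (1/2 * (1/2) ^ (n + k)).
    split_Rabs; lra.
Qed.

Lemma cantor_approx_close (n m : nat) (s : list bool) (x : R) : (n <= m)%nat ->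
  Rabs (cantor_approx m s x - cantor_approx n s x) <= 2 * (1/2) ^ n.
Proof.
  intros Hnm. replace m with (n + (m - n))%nat by lia.
  pose proof (cantor_approx_tail n (m - n) s x). pose proof (pow_le (1/2) (n + (m - n)) ltac:(lra)).
  lra.
Qed.

Lemma cantor_approx_cauchy (x : R) : Cauchy_crit (fun n => cantor_approx n nil x).
Proof.
  intros eps Heps. destruct (half_pow_small eps Heps) as [N HN]. exists N.
  intros n m Hn Hm. unfold R_dist.
  destruct (Nat.le_ge_cases n m).
  - rewrite Rabs_minus_sym. eapply Rle_lt_trans; [apply cantor_approx_close; auto|]. auto.
  - eapply Rle_lt_trans; [apply cantor_approx_close; auto|]. auto.
Qed.

Definition cantor_fun (x : R) : R := proj1_sig (R_complete _ (cantor_approx_cauchy x)).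

Lemma cantor_fun_approx (n : nat) (x : R) :
  Rabs (cantor_fun x - cantor_approx n nil x) <= 2 * (1/2) ^ n.
Proof.
  unfold cantor_fun. destruct (R_complete _ (cantor_approx_cauchy x)) as [l Hl]. simpl.
  apply Rle_plus_epsilon. intros eps Heps. destruct (Hl eps Heps) as [N HN].
  specialize (HN (Nat.max N n) ltac:(lia)). unfold R_dist in HN.
  pose proof (cantor_approx_close n (Nat.max N n) nil x ltac:(lia)).
  split_Rabs; lra.
Qed.

Lemma cantor_fun_continuous : continuity cantor_fun.
Proof.
  intros x. apply (CVU_continuity (fun n => cantor_approx n nil) cantor_fun x (mkposreal 1 Rlt_0_1)).
  - intros eps Heps. destruct (half_pow_small eps Heps) as [N HN]. exists N.
    intros n y Hn _. eapply Rle_lt_trans; [apply cantor_fun_approx|auto].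
  - intros n y _. apply cantor_approx_continuous.
  - unfold Boule. simpl. unfold Rminus. rewrite Rplus_opp_r, Rabs_R0. lra.
Qed.

Lemma cantor_fun_left (x : R) : x <= fst (I nil) -> cantor_fun x = 0.
Proof.
  intros Hx. apply (Req_of_half_pow _ _ 0). intros n _.
  pose proof (cantor_fun_approx n x). rewrite cantor_approx_left in H by exact Hx.
  pose proof (pow_le (1/2) n ltac:(lra)). lra.
Qed.

Lemma cantor_fun_right (x : R) : snd (I nil) <= x -> cantor_fun x = 1.
Proof.
  intros Hx. apply (Req_of_half_pow _ _ 0). intros n _.
  pose proof (cantor_fun_approx n x). rewrite cantor_approx_right in H by exact Hx.
  pose proof (pow_le (1/2) n ltac:(lra)). lra.
Qed.

Lemma cantor_approx_locally_constant (n : nat) : forall s x,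
  (forall t, length t = n -> ~ closed_interval (I (t ++ s)) x) ->
  exists d, 0 < d /\ forall k y, Rabs (y - x) < d ->
    cantor_approx (n + k) s y = cantor_approx (n + k) s x.
Proof.
  induction n as [|n IH]; intros s x Hout.
  - specialize (Hout nil eq_refl). unfold closed_interval in Hout. simpl in Hout.
    destruct (Rlt_dec x (fst (I s))) as [Hx|Hx].
    + exists (fst (I s) - x). split; [lra|]. intros k y Hy. apply Rabs_def2 in Hy.
      simpl. rewrite !cantor_approx_left by lra. reflexivity.
    + assert (snd (I s) < x) by lra.
      exists (x - snd (I s)). split; [lra|]. intros k y Hy. apply Rabs_def2 in Hy.
      simpl. rewrite !cantor_approx_right by lra. reflexivity.
  - assert (Hchild : forall b, exists d, 0 < d /\ forall k y, Rabs (y - x) < d ->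
                cantor_approx (n + k) (b :: s) y = cantor_approx (n + k) (b :: s) x).
    { intro b. apply IH. intros t Ht.
      replace (t ++ b :: s) with ((t ++ b :: nil) ++ s) by (rewrite <- app_assoc; reflexivity).
      apply Hout. rewrite length_app, Ht. simpl. lia. }
    destruct (Hchild false) as [d0 [Hd0 E0]]. destruct (Hchild true) as [d1 [Hd1 E1]].
    exists (Rmin d0 d1). split; [apply Rmin_pos; auto|]. intros k y Hy.
    pose proof (Rmin_l d0 d1). pose proof (Rmin_r d0 d1).
    simpl. rewrite (E0 k y), (E1 k y) by lra. reflexivity.
Qed.

Lemma cantor_fun_locally_constant (n : nat) (x : R) : ~ in_level I n x ->
  exists d, 0 < d /\ forall y, Rabs (y - x) < d -> cantor_fun y = cantor_fun x.
Proof.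
  intros Hout. destruct (cantor_approx_locally_constant n nil x) as [d [Hd Hconst]].
  { intros t Ht Hin. apply Hout. exists t. rewrite app_nil_r in Hin. auto. }
  exists d. split; [exact Hd|]. intros y Hy. apply (Req_of_half_pow _ _ n). intros m Hm.
  pose proof (cantor_fun_approx m x). pose proof (cantor_fun_approx m y).
  replace m with (n + (m - n))%nat in * by lia. rewrite (Hconst _ y Hy) in *.
  split_Rabs; lra.
Qed.

End CantorFunction.

Definition oscillation_le (F : R -> R) (J : R * R) (e : R) : Prop :=
  forall y z, closed_interval J y -> closed_interval J z -> Rabs (F y - F z) <= e.

Lemma oscillation_le_weaken (F : R -> R) (J : R * R) (e e' : R) :
  e <= e' -> oscillation_le F J e -> oscillation_le F J e'.
Proof. intros He HJ y z Hy Hz. pose proof (HJ y z Hy Hz). lra. Qed.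

Lemma small_oscillation_near (F : R -> R) (p e : R) : continuity_pt F p -> 0 < e ->
  exists d, 0 < d /\ forall r, r < d -> oscillation_le F (p - r, p + r) e.
Proof.
  intros Hp He. destruct (proj1 (continuity_pt_iff F p) Hp (e / 2)) as [d [Hd Hnear]]; [lra|].
  exists d. split; [exact Hd|]. intros r Hr y z Hy Hz. unfold closed_interval in Hy, Hz. simpl in Hy, Hz.
  pose proof (Hnear y ltac:(apply Rabs_def1; lra)). pose proof (Hnear z ltac:(apply Rabs_def1; lra)).
  split_Rabs; lra.
Qed.

Lemma continuity_of_oscillation (F : R -> R) (x : R) :
  (forall e, 0 < e -> exists J, fst J < x < snd J /\ oscillation_le F J e) -> continuity_pt F x.
Proof.
  intros Hosc. apply continuity_pt_iff. intros eps Heps.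
  destruct (Hosc (eps / 2) ltac:(lra)) as [J [HJ Ho]].
  exists (Rmin (x - fst J) (snd J - x)). split; [apply Rmin_pos; lra|]. intros y Hy.
  pose proof (Rmin_l (x - fst J) (snd J - x)). pose proof (Rmin_r (x - fst J) (snd J - x)).
  apply Rabs_def2 in Hy.
  assert (Hyx : Rabs (F y - F x) <= eps / 2) by (apply Ho; unfold closed_interval; lra).
  lra.
Qed.

Definition rich_interval (F : R -> R) (J : R * R) : Prop :=
  fst J < snd J /\ uncountable_set (fun x => continuity_points F x /\ fst J < x < snd J).

Definition fine_split (F : R -> R) (e : R) (J JL JR : R * R) : Prop :=
  splits_into J JL JR /\ rich_interval F JL /\ rich_interval F JR /\
  oscillation_le F JL e /\ oscillation_le F JR e.

Lemma rich_interval_fine_split (F : R -> R) (e : R) (J : R * R) : 0 < e -> rich_interval F J ->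
  exists JL JR, fine_split F e J JL JR.
Proof.
  destruct J as [a b]. intros He [Hab HC]. simpl in *.
  destruct (uncountable_two_points _ (condensation_points_uncountable _ HC))
    as [p [q [Hpq [[[Cp Hp] Kp] [[Cq Hq] Kq]]]]].
  destruct (small_oscillation_near F p e Cp He) as [dp [Hdp Op]].
  destruct (small_oscillation_near F q e Cq He) as [dq [Hdq Oq]].
  set (r := Rmin (Rmin dp dq) (Rmin (q - p) (Rmin (p - a) (b - q))) / 3).
  assert (Hr : 0 < r /\ r < dp /\ r < dq /\ 2 * r < q - p /\ r < p - a /\ r < b - q).
  { unfold r, Rmin. repeat destruct Rle_dec; lra. }
  destruct Hr as [Hr0 [Hrp [Hrq [Hrpq [Hrpa Hrbq]]]]].
  assert (Hrich : forall c, condensation_point (fun x => continuity_points F x /\ a < x < b) c ->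
                  rich_interval F (c - r, c + r)).
  { intros c Kc. split; simpl; [lra|].
    eapply uncountable_superset; [|exact (Kc r Hr0)].
    intros x [[Cx _] Hx]. split; [exact Cx|simpl; lra]. }
  exists (p - r, p + r), (q - r, q + r).
  split; [unfold splits_into; simpl; lra|].
  split; [apply Hrich, Kp|]. split; [apply Hrich, Kq|].
  split; [apply Op|apply Oq]; lra.
Qed.

Definition tolerance (n : nat) : R := / (INR n + 1).

Lemma tolerance_pos (n : nat) : 0 < tolerance n.
Proof. apply Rinv_0_lt_compat. pose proof (pos_INR n). lra. Qed.

Definition choose_split (F : R -> R) (e : R) (J : R * R) : (R * R) * (R * R) :=
  epsilon (inhabits ((0, 0), (0, 0))) (fun LR => fine_split F e J (fst LR) (snd LR)).

Lemma choose_split_spec (F : R -> R) (e : R) (J : R * R) : 0 < e -> rich_interval F J ->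
  fine_split F e J (fst (choose_split F e J)) (snd (choose_split F e J)).
Proof.
  intros He HJ. apply (epsilon_spec _ (fun LR => fine_split F e J (fst LR) (snd LR))).
  destruct (rich_interval_fine_split F e J He HJ) as [JL [JR H]]. exists (JL, JR). exact H.
Qed.

Fixpoint split_tree (F : R -> R) (J0 : R * R) (s : list bool) : R * R :=
  match s with
  | nil => J0
  | b :: s => let LR := choose_split F (tolerance (length s)) (split_tree F J0 s) in
              if b then snd LR else fst LR
  end.

Section SplitTree.

Variables (F : R -> R) (J0 : R * R).
Hypothesis J0_rich : rich_interval F J0.

Lemma split_tree_rich (s : list bool) : rich_interval F (split_tree F J0 s).
Proof.
  induction s as [|b s IH]; [exact J0_rich|].
  destruct (choose_split_spec F _ _ (tolerance_pos (length s)) IH) as [_ [HL [HR _]]].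
  destruct b; assumption.
Qed.

Lemma split_tree_fine_split (s : list bool) :
  fine_split F (tolerance (length s))
    (split_tree F J0 s) (split_tree F J0 (false :: s)) (split_tree F J0 (true :: s)).
Proof. exact (choose_split_spec F _ _ (tolerance_pos (length s)) (split_tree_rich s)). Qed.

Lemma split_tree_nondegenerate (s : list bool) : fst (split_tree F J0 s) < snd (split_tree F J0 s).
Proof. apply split_tree_rich. Qed.

Lemma split_tree_splits (s : list bool) :
  splits_into (split_tree F J0 s) (split_tree F J0 (false :: s)) (split_tree F J0 (true :: s)).
Proof. apply split_tree_fine_split. Qed.

(* A point of depth [n + 2] is interior to its ancestor of depth [n + 1], on which [F]
   oscillates by at most [tolerance n]. *)
Lemma split_tree_continuity (x : R) : (forall n, in_level (split_tree F J0) n x) ->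
  continuity_pt F x.
Proof.
  intros Hx. apply continuity_of_oscillation. intros e He.
  destruct (archimed_cor1 e He) as [N [HN HN0]].
  destruct (Hx (S (S N))) as [[|b1 [|b2 t]] [Hlen Hin]]; try discriminate.
  simpl in Hlen. injection Hlen as Hlen.
  exists (split_tree F J0 (b2 :: t)). split.
  - destruct (split_tree_splits (b2 :: t)) as [H1 [H2 H3]].
    pose proof (split_tree_nondegenerate (false :: b2 :: t)).
    pose proof (split_tree_nondegenerate (true :: b2 :: t)).
    unfold closed_interval in Hin. destruct b1; lra.
  - assert (Htol : tolerance (length t) <= e).
    { unfold tolerance. rewrite Hlen. apply Rlt_le, Rlt_trans with (/ INR N); [|exact HN].
      assert (0 < INR N) by (apply lt_0_INR; lia).
      apply Rinv_lt_contravar; nra. }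
    destruct (split_tree_fine_split t) as [_ [_ [_ [OL OR]]]].
    destruct b2; eapply oscillation_le_weaken; eauto.
Qed.

End SplitTree.

Theorem mainTheorem7 (F : R -> R) :
  Darboux F ->
  uncountable_set (continuity_points F) ->
  exists g : R -> R,
    continuity g /\ ~ constant_fun g /\ Darboux (fun x => F x + g x).
Proof.
  intros HF HC.
  destruct (uncountable_two_points _ (condensation_points_uncountable _ HC))
    as [p [_ [_ [[_ Kp] _]]]].
  set (J0 := (p - 1, p + 1)).
  assert (HJ0 : rich_interval F J0).
  { split; simpl; [lra|]. apply (Kp 1 Rlt_0_1). }
  set (I := split_tree F J0).
  set (g := cantor_fun I (split_tree_nondegenerate F J0 HJ0) (split_tree_splits F J0 HJ0)).
  exists g. split; [|split].
  - apply cantor_fun_continuous.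
  - intro Hconst. specialize (Hconst (fst J0) (snd J0)). unfold g in Hconst.
    rewrite cantor_fun_left, cantor_fun_right in Hconst; simpl; lra.
  - apply darboux_of_local. intro x.
    destruct (classic (forall n, in_level I n x)) as [Hin|Hout].
    + left. apply continuity_pt_plus; [|apply cantor_fun_continuous].
      exact (split_tree_continuity F J0 HJ0 x Hin).
    + right. apply not_all_ex_not in Hout as [n Hn].
      apply locally_darboux_add_locally_constant; [exact HF|].
      exact (cantor_fun_locally_constant I _ _ n x Hn).
Qed.
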